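(* Let $Q$ be a QNP and let $Q_M$ be the QNP obtained from $P=T(Q)$ as described in the context. If a policy $\pi$ solves the FOND problem $P=T(Q)$ (i.e. is a strong cyclic solution of it), then $\pi$ solves the QNP $Q_M$.
   Context: QNPs: $Q=\langle F,V,I,O,G\rangle$ with propositional variables $F$, numerical variables $V$ (non-negative reals), literals $p,\neg p$, $X=0$, $X>0$; actions with precondition $Pre(a)$, propositional effects $\mathit{Eff}(a)$, numerical effects $N(a)\subseteq\{Inc(X),Dec(X)\}$ (at most one per variable; $Dec(X)\in N(a)$ implies $X>0\in Pre(a)$). A state assigns truth values to the propositional variables and reals $\ge0$ to $V$; initial states satisfy $I$ (closed world); goal states satisfy $G$; for applicable $a$, successors apply propositional effects, strictly increase $X$ for $Inc(X)$, strictly decrease $X$ for $Dec(X)$, leave the rest unchanged. For $\epsilon>0$, an $\epsilon$-trajectory is such a sequence $s_0,a_0,s_1,\dots$ from an initial state in which every change of a variable has magnitude $\ge\epsilon$ unless it goes from a value $<\epsilon$ to $0$. Policies map states to actions depending only on the truth values of the propositional atoms and the atoms $X=0$; a maximal $\pi$-trajectory is infinite without goal, ends at its first goal state, or ends where $\pi$ is undefined/inapplicable; $\pi$ solves a QNP iff for every $\epsilon>0$ every maximal $\epsilon$-$\pi$-trajectory reaches a goal state. The FOND problem $T(Q)$: $n=|F|+|V|$, $Max=1+2^n$. Propositional variables: $F$, $p_{X=0}$ ($X\in V$; $X=0$/$X>0$ denote $p_{X=0}$/$\neg p_{X=0}$), $in(X)$, $depth(d)$ ($0\le d\le|V|$),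 $index(X,d)$ ($1\le d\le|V|$), counters $c(d)$ ($0\le d\le|V|$), $c_T$ over $\{0,\dots,Max\}$ encoded in binary. Initial state: $I$ plus $depth(0)$, counters $0$, other new atoms false; goal $G$. Actions: $Push(X,d)$ ($0\le d<|V|$): pre $\neg in(X),depth(d),c(d)<Max$; eff $in(X),index(X,d+1),depth(d+1),\neg depth(d),c(d):=c(d)+1,c(d+1):=0$. $Pop(X,d)$ ($1\le d\le|V|$): pre $in(X),index(X,d),depth(d)$; eff $\neg in(X),\neg index(X,d),\neg depth(d),depth(d-1)$. $Move$: pre $depth(0),c_T<Max$; eff $c_T:=c_T+1$. For $a\in O$ with no $Dec$ effect: action $a$ with pre $Pre(a)$ plus $\neg in(Y)$ for each $Inc(Y)\in N(a)$, eff $\mathit{Eff}(a)$ plus $Y>0$ for each $Inc(Y)\in N(a)$. For $a$ with a $Dec$ effect, $X$ with $Dec(X)\in N(a)$, $1\le d\le|V|$: action $a(X,d)$ with pre $Pre(a)$, $\neg in(Y)$ for $Inc(Y)\in N(a)$, $index(X,d)$; eff $\mathit{Eff}(a)$, $Y>0$ for $Inc(Y)\in N(a)$, nondeterministic $Z>0\mid Z=0$ for each $Dec(Z)\in N(a)$, $c(d'):=0$ for $d\le d'\le|V|$. A strong cyclic solution of a FOND problem is a policy such that from every state reachable from the initial state under $\pi$ some goal state is reachable under $\pi$. $Q_M$ is the QNP whose propositional variables are those of $T(Q)$ other than the atoms $p_{X=0}$, whose numerical variables are $V$, whose initial situation, goal and actions are those of $T(Q)$ except that literals $p_{X=0}$/$\neg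 p_{X=0}$ in initial situation, goal and preconditions are read as the numerical literals $X=0$/$X>0$, each effect $Y>0$ originating from $Inc(Y)$ is replaced by $Inc(Y)$, and each nondeterministic effect $Z>0\mid Z=0$ is replaced by $Dec(Z)$. Thus $T(Q)$ is the direct translation of $Q_M$ and a policy for $T(Q)$ is a policy for $Q_M$. *)

From Stdlib Require Import Reals Relations.
From mathcomp Require Import all_boot.

Set Implicit Arguments.
Unset Strict Implicit.
Unset Printing Implicit Defensive.

Inductive lit (F V : Type) : Type :=
| PosP of F
| NegP of F
| Zero of V
| Posv of V.
Arguments PosP {F V}. Arguments NegP {F V}.
Arguments Zero {F V}. Arguments Posv {F V}.

Inductive numeff : Type := Inc | Dec.

(* A (consistent) set of propositional effects Eff(a) is a map F -> option bool
   (Some true = p, Some false = ~p, None = p untouched).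
   N(a) is a map V -> option numeff (at most one effect per variable). *)
Record qnp : Type := QNP {
  qF : finType;
  qV : finType;
  qO : finType;
  qI : lit qF qV -> bool;
  qG : lit qF qV -> bool;
  qPre : qO -> lit qF qV -> bool;
  qEff : qO -> qF -> option bool;
  qN : qO -> qV -> option numeff;
  qN_dec_pre : forall a X, qN a X = Some Dec -> qPre a (Posv X)
}.

Definition lit_holds (F V : Type) (fv : F -> bool) (z : V -> bool) (l : lit F V) : bool :=
  match l with
  | PosP p => fv p
  | NegP p => ~~ fv p
  | Zero X => z X
  | Posv X => ~~ z X
  end.

(* all literals of the set L hold; z X = true encodes X = 0 *)
Definition sat (F V : Type) (L : lit F V -> bool) (fv : F -> bool) (z : V -> bool) : Prop :=
  forall l, L l -> lit_holds fv z l.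

Definition apply_eff (F : Type) (e : F -> option bool) (fv : F -> bool) : F -> bool :=
  fun p => match e p with Some b => b | None => fv p end.

(* A QNP whose propositional part is given by an abstract type of
   propositional valuations gB (used for Q_M, whose counters are
   multi-valued), numerical variables gV, actions gA.  Conditions are
   predicates of the propositional valuation and of the truth values of
   the atoms X = 0 (z X = true iff X = 0). *)
Record gqnp : Type := GQNP {
  gB : Type;
  gV : finType;
  gA : Type;
  ginit : gB -> (gV -> bool) -> Prop;
  ggoal : gB -> (gV -> bool) -> Prop;
  gpre  : gA -> gB -> (gV -> bool) -> Prop;
  gpeff : gA -> gB -> gB;
  gneff : gA -> gV -> option numeff
}.

Section GSem.
Local Open Scope R_scope.
Variable Q : gqnp.

Definition zpat (v : gV Q -> R) (z : gV Q -> bool) : Prop :=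
  forall X, z X = true <-> v X = 0.

Definition gpolicy := gB Q -> (gV Q -> bool) -> option (gA Q).

Definition gstate := (gB Q * (gV Q -> R))%type.

Definition g_is_init (s : gstate) : Prop :=
  (forall X, (0 <= s.2 X)) /\ exists z, zpat s.2 z /\ ginit s.1 z.

Definition g_is_goal (s : gstate) : Prop :=
  exists z, zpat s.2 z /\ ggoal s.1 z.

Definition g_applicable (a : gA Q) (s : gstate) : Prop :=
  exists z, zpat s.2 z /\ gpre a s.1 z.

Definition g_chooses (pi : gpolicy) (s : gstate) (a : gA Q) : Prop :=
  exists z, zpat s.2 z /\ pi s.1 z = Some a.

Definition g_succ (a : gA Q) (s s' : gstate) : Prop :=
  s'.1 = gpeff a s.1 /\
  forall X, (0 <= s'.2 X) /\
    match gneff a X with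
    | Some Inc => (s.2 X < s'.2 X)
    | Some Dec => (s'.2 X < s.2 X)
    | None => s'.2 X = s.2 X
    end.

Definition eps_change (eps : R) (s s' : gstate) : Prop :=
  forall X, s'.2 X <> s.2 X ->
    (eps <= Rabs (s'.2 X - s.2 X)) \/ ((s.2 X < eps) /\ s'.2 X = 0).

(* A trajectory s_0, a_0, s_1, ... ; len = None: infinite,
   len = Some n: states s_0 .. s_n and actions a_0 .. a_(n-1). *)
Definition in_steps (len : option nat) (i : nat) : Prop :=
  match len with None => True | Some n => (i < n)%N end.

Definition in_states (len : option nat) (i : nat) : Prop :=
  match len with None => True | Some n => (i <= n)%N end.

Definition max_eps_pi_traj (eps : R) (pi : gpolicy)
    (st : nat -> gstate) (ac : nat -> gA Q) (len : option nat) : Prop :=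
  g_is_init (st 0%N) /\
  (forall i, in_steps len i ->
     ~ g_is_goal (st i) /\
     g_chooses pi (st i) (ac i) /\
     g_applicable (ac i) (st i) /\
     g_succ (ac i) (st i) (st i.+1) /\
     eps_change eps (st i) (st i.+1)) /\
  (match len with
   | None => True
   | Some n => g_is_goal (st n) \/
               (forall a, g_chooses pi (st n) a -> ~ g_applicable a (st n))
   end).

Definition qnp_solves (pi : gpolicy) : Prop :=
  forall eps : R, (0 < eps) ->
  forall st ac len, max_eps_pi_traj eps pi st ac len ->
  exists i, in_states len i /\ g_is_goal (st i).

End GSem.

Record fond : Type := FOND {
  fS : Type;
  fA : Type;
  finit : fS;
  fgoal : fS -> Prop;
  fpre : fA -> fS -> Prop;
  fsucc : fA -> fS -> fS -> Prop
}.

Definition fpolicy (P : fond) := fS P -> option (fA P).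

Definition fstep (P : fond) (pi : fpolicy P) (s s' : fS P) : Prop :=
  ~ fgoal s /\ exists a, pi s = Some a /\ fpre a s /\ fsucc a s s'.

Definition freach (P : fond) (pi : fpolicy P) : fS P -> fS P -> Prop :=
  clos_refl_trans (fS P) (fstep pi).

Definition strong_cyclic (P : fond) (pi : fpolicy P) : Prop :=
  forall s, freach pi (finit P) s -> exists g, freach pi s g /\ fgoal g.

Section Translation.
Variable Q : qnp.
Local Notation F := (qF Q).
Local Notation V := (qV Q).
Local Notation O := (qO Q).

Definition nvars : nat := #|F| + #|V|.
Definition nV : nat := #|V|.
Definition Max : nat := 1 + 2 ^ nvars.

(* Propositional atoms of T(Q) other than the p_{X=0}.  Atoms depth(d),
   index(X,d), c(d) are indexed by nat; only 0 <= d <= |V| are ever used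
   (others stay constantly false / 0).  Counters c(d), c_T (binary encoded
   in the paper) are represented by their values. *)
Record tprop : Type := TProp {
  tF : F -> bool;
  tin : V -> bool;
  tdepth : nat -> bool;
  tindex : V -> nat -> bool;
  tc : nat -> nat;
  tcT : nat
}.

Inductive tact : Type :=
| Push of V & nat
| Pop of V & nat
| Move
| OrigA of O               (* a, for a with no Dec effect *)
| OrigD of O & V & nat.    (* a(X,d), for Dec(X) in N(a) *)

Definition upd_bool (f : nat -> bool) (k : nat) (b : bool) : nat -> bool :=
  fun j => if j == k then b else f j.
Definition upd_nat (f : nat -> nat) (k : nat) (b : nat) : nat -> nat :=
  fun j => if j == k then b else f j.
Definition upd_V (f : V -> bool) (X : V) (b : bool) : V -> bool :=
  fun Y => if Y == X then b else f Y.
Definition upd_index (f : V -> nat -> bool) (X : V) (d : nat) (b : bool) :=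
  fun Y j => if (Y == X) && (j == d) then b else f Y j.

Definition inc_ok (a : O) (t : tprop) : Prop :=
  forall Y, qN a Y = Some Inc -> tin t Y = false.

(* preconditions of T(Q) (z X = true is the atom p_{X=0}) *)
Definition tpre (act : tact) (t : tprop) (z : V -> bool) : Prop :=
  match act with
  | Push X d => (d < nV)%N /\ tin t X = false /\ tdepth t d /\ (tc t d < Max)%N
  | Pop X d => (1 <= d <= nV)%N /\ tin t X /\ tindex t X d /\ tdepth t d
  | Move => tdepth t 0 /\ (tcT t < Max)%N
  | OrigA a => (forall X, qN a X <> Some Dec) /\ sat (qPre a) (tF t) z /\ inc_ok a t
  | OrigD a X d => qN a X = Some Dec /\ (1 <= d <= nV)%N /\
                   sat (qPre a) (tF t) z /\ inc_ok a t /\ tindex t X d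
  end.

Definition tpeff (act : tact) (t : tprop) : tprop :=
  match act with
  | Push X d =>
      TProp (tF t) (upd_V (tin t) X true)
            (upd_bool (upd_bool (tdepth t) d false) d.+1 true)
            (upd_index (tindex t) X d.+1 true)
            (upd_nat (upd_nat (tc t) d (tc t d).+1) d.+1 0)
            (tcT t)
  | Pop X d =>
      TProp (tF t) (upd_V (tin t) X false)
            (upd_bool (upd_bool (tdepth t) d false) d.-1 true)
            (upd_index (tindex t) X d false)
            (tc t) (tcT t)
  | Move => TProp (tF t) (tin t) (tdepth t) (tindex t) (tc t) (tcT t).+1
  | OrigA a => TProp (apply_eff (qEff a) (tF t)) (tin t) (tdepth t) (tindex t) (tc t) (tcT t)
  | OrigD a X d =>
      TProp (apply_eff (qEff a) (tF t)) (tin t) (tdepth t) (tindex t)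
            (fun j => if (d <= j <= nV)%N then 0 else tc t j) (tcT t)
  end.

Definition tneff (act : tact) : V -> option numeff :=
  match act with
  | OrigA a => qN a
  | OrigD a _ _ => qN a
  | _ => fun _ => None
  end.

(* initial situation of T(Q): I (closed world, p_{X=0} true iff X=0 in I)
   plus depth(0), counters 0, other new atoms false *)
Definition tinit_prop : tprop :=
  TProp (fun p => @qI Q (PosP p)) (fun _ => false) (fun d => d == 0)
        (fun _ _ => false) (fun _ => 0) 0.
Definition tinit_z : V -> bool := fun X => @qI Q (Zero X).

Definition tgoal (t : tprop) (z : V -> bool) : Prop := sat (@qG Q) (tF t) z.

(* the FOND problem T(Q): states = (other atoms, atoms p_{X=0});
   Inc(Y) becomes Y>0, Dec(Z) becomes Z>0 | Z=0 *)
Definition T_succ (act : tact) (s s' : tprop * (V -> bool)) : Prop :=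
  s'.1 = tpeff act s.1 /\
  forall Y, match tneff act Y with
            | Some Inc => s'.2 Y = false
            | Some Dec => True
            | None => s'.2 Y = s.2 Y
            end.

Definition TQ : fond :=
  @FOND (tprop * (V -> bool))%type tact
        (tinit_prop, tinit_z)
        (fun s => tgoal s.1 s.2)
        (fun a s => tpre a s.1 s.2)
        T_succ.

Definition QM : gqnp :=
  @GQNP tprop V tact
        (fun t z => t = tinit_prop /\ z = tinit_z)
        tgoal tpre tpeff tneff.

Definition policy_QM (pi : fpolicy TQ) : gpolicy QM := fun t z => pi (t, z).

End Translation.

From Stdlib Require Import Reals Relations Lra Classical FunctionalExtensionality.
From mathcomp Require Import all_boot zify.

Set Implicit Arguments.
Unset Strict Implicit.
Unset Printing Implicit Defensive.

(* Abstract a state of Q_M to the state of T(Q) given by its propositional part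
   and its zero pattern.  Consecutive states of an eps-trajectory under pi then
   abstract to a transition of T(Q) under pi, so every abstract state is
   reachable under pi.  A finite maximal trajectory cannot stop at a non-goal
   state, since strong cyclicity makes a goal reachable from it, so pi is
   defined and applicable there.

   On an infinite trajectory the actions with Dec effects eventually stop.
   Suppose the stack depth eventually stays >= k.  The stack levels <= k are
   then frozen, so the variables stored there are never increased; as each
   decrement lowers them by eps or sends them to 0, they are decremented only
   finitely often.  Afterwards c(k) is never reset, so the pushes at level k,
   each raising c(k) < Max, stop as well.  Either the depth settles at k, where
   a(X,d) would need a level d <= k, or it eventually stays >= k+1; induct on
   |V| + 1 - k.  Without Dec effects T(Q) is deterministic, so what is
   reachable from a late abstract state are the later abstract states, and
   strong cyclicity puts a goal among them. *)

Definition eventually (P : nat -> Prop) : Prop :=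
  exists N, forall i, (N <= i)%N -> P i.

Lemma eventually_ge T : eventually (fun i => (T <= i)%N).
Proof. by exists T. Qed.

Lemma eventually_and (P1 P2 : nat -> Prop) :
  eventually P1 -> eventually P2 -> eventually (fun i => P1 i /\ P2 i).
Proof.
move=> [N1 h1] [N2 h2]; exists (maxn N1 N2) => i; rewrite geq_max => /andP[i1 i2].
by split; [exact: h1 | exact: h2].
Qed.

Lemma eventually_forall_fin (T : finType) (P : T -> nat -> Prop) :
  (forall x, eventually (P x)) -> eventually (fun i => forall x, P x i).
Proof.
move=> hP; suff [N hN] : eventually (fun i => forall x, x \in enum T -> P x i).
  by exists N => i /hN h x; apply: h; rewrite mem_enum.
elim: (enum T) => [|x s IH]; first by exists 0.
have [N hN] := eventually_and (hP x) IH.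
by exists N => i /hN [hx hs] y; rewrite in_cons => /predU1P[-> | /hs].
Qed.

Section Descent.
Local Open Scope R_scope.

Lemma nonincreasing_from (r : nat -> R) T :
  (forall i, (T <= i)%N -> r i.+1 <= r i) ->
  forall i j, (T <= i)%N -> (i <= j)%N -> r j <= r i.
Proof.
move=> dec i j Ti; elim: j => [|j IH]; first by rewrite leqn0 => /eqP ->; lra.
rewrite leq_eqVlt ltnS => /predU1P[-> | ij]; first lra.
have := IH ij; have := dec j (leq_trans Ti ij); lra.
Qed.

Lemma eventually_no_eps_drop (r : nat -> R) (E : nat -> Prop) (eps : R) T :
  0 < eps ->
  (forall i, (T <= i)%N -> r i.+1 <= r i) ->
  (forall i, (T <= i)%N -> E i -> 0 < r i /\ (r i.+1 <= r i - eps \/ r i.+1 = 0)) ->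
  eventually (fun i => ~ E i).
Proof.
move=> eps_gt0 dec drop.
suff bounded n i : (T <= i)%N -> r i <= INR n * eps -> eventually (fun i => ~ E i).
  have [n lt_n] := INR_unbounded (r T / eps); apply: (bounded n T (leqnn T)).
  have -> : r T = r T / eps * eps by field; lra.
  by apply: Rmult_le_compat_r; lra.
elim: n i => [|n IH] i Ti r_le.
all: case: (classic (exists j, (i <= j)%N /\ E j)) => [[j [ij Ej]] | none];
  last by exists i => j ij Ej; apply: none; exists j.
all: have Tj := leq_trans Ti ij; have rj_le := nonincreasing_from dec Ti ij.
all: have [r_pos drop_j] := drop j Tj Ej.
  by rewrite Rmult_0_l in r_le; lra.
apply: (IH j.+1 (leqW Tj)); rewrite S_INR in r_le.
have := Rmult_le_pos _ _ (pos_INR n) (Rlt_le _ _ eps_gt0); lra.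
Qed.

End Descent.

Section ZeroPattern.
Local Open Scope R_scope.

Definition zero_pattern (V : Type) (v : V -> R) : V -> bool :=
  fun X => if Req_dec_T (v X) 0 then true else false.

Lemma zero_patternP (V : Type) (v : V -> R) X : reflect (v X = 0) (zero_pattern v X).
Proof. by rewrite /zero_pattern; case: Req_dec_T => h; constructor. Qed.

Lemma zpat_exists (G : gqnp) (v : gV G -> R) (P : (gV G -> bool) -> Prop) :
  (exists z, zpat v z /\ P z) <-> P (zero_pattern v).
Proof.
split=> [[z [hz Pz]] | Pv].
  suff <- : z = zero_pattern v by [].
  by apply: functional_extensionality => X; apply/idP/zero_patternP => /hz.
by exists (zero_pattern v); split=> // X; split=> /zero_patternP.
Qed.

End ZeroPattern.

Lemma in_steps_states len i : in_steps len i -> in_states len i.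
Proof. by case: len => //= n /ltnW. Qed.

Section Stack.
Variable Q : qnp.

Record stack_wf (t : tprop Q) (D : nat) : Prop := StackWf {
  stack_depth_le : D <= nV Q;
  stack_depthE : forall j, tdepth t j = (j == D);
  stack_index_in : forall X d, tindex t X d -> tin t X;
  stack_index_le : forall X d, tindex t X d -> d <= D;
  stack_index_level_inj : forall X d d', tindex t X d -> tindex t X d' -> d = d';
  stack_index_var_inj : forall X Y d, tindex t X d -> tindex t Y d -> X = Y
}.

Definition next_depth (a : tact Q) (D : nat) : nat :=
  match a with Push _ _ => D.+1 | Pop _ _ => D.-1 | _ => D end.

Lemma stack_wf_init : stack_wf (tinit_prop Q) 0.
Proof. by constructor. Qed.

Lemma push_depth t D X d z : stack_wf t D -> tpre (Push X d) t z -> d = D.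
Proof. by move=> wf [_ [_ [dep _]]]; apply/eqP; rewrite -(stack_depthE wf). Qed.

Lemma pop_depth t D X d z : stack_wf t D -> tpre (Pop X d) t z -> d = D.
Proof. by move=> wf [_ [_ [_ dep]]]; apply/eqP; rewrite -(stack_depthE wf). Qed.

Lemma stack_wf_push t D X z :
  stack_wf t D -> tpre (Push X D) t z -> stack_wf (tpeff (Push X D) t) D.+1.
Proof.
move=> wf [lt_D [notin _]].
have outX e : tindex t X e = false.
  by apply/negP => /(stack_index_in wf); rewrite notin.
have out_top Y : tindex t Y D.+1 = false.
  by apply/negP => /(stack_index_le wf); rewrite ltnn.
constructor=> //= [j | Y d | Y d | Y d d' | Y1 Y2 d];
  rewrite /upd_bool /upd_V /upd_index.
- case: (eqVneq j D.+1) => [// | _]; case: (eqVneq j D) => [// | neq].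
  by rewrite (stack_depthE wf) (negbTE neq).
- by case: (eqVneq Y X) => [// | _ /(stack_index_in wf)].
- by case: ifP => [/andP[_ /eqP ->] // | _ /(stack_index_le wf) /leqW].
- case: (eqVneq Y X) => [-> | _] /=; last exact: (stack_index_level_inj wf).
  by rewrite !outX; case: eqP => [-> | //]; case: eqP => [-> | //].
- case: (eqVneq d D.+1) => [-> | nd]; rewrite ?andbT ?andbF /=;
    last exact: (stack_index_var_inj wf).
  by rewrite !out_top; case: eqP => [-> | //]; case: eqP => [-> | //].
Qed.

Lemma stack_wf_pop t D X z :
  stack_wf t D -> tpre (Pop X D) t z -> stack_wf (tpeff (Pop X D) t) D.-1.
Proof.
move=> wf [/andP[D_ge1 D_le] [_ [idxX _]]].
constructor=> /= [| j | Y d | Y d | Y d d' | Y1 Y2 d];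
  rewrite /upd_bool /upd_V /upd_index.
- exact: leq_trans (leq_pred D) D_le.
- case: (eqVneq j D.-1) => [// | _]; case: (eqVneq j D) => [// | neq].
  by rewrite (stack_depthE wf) (negbTE neq).
- case: (eqVneq Y X) => [-> | _] /=; last exact: (stack_index_in wf).
  by case: eqP => [// | nd] /(stack_index_level_inj wf)/(_ idxX).
- case: ifP => // /negbT nYd idx.
  have nd : d != D.
    apply: contraNneq nYd => ed; move: idx; rewrite ed => idx.
    by rewrite (stack_index_var_inj wf idx idxX) !eqxx.
  have := stack_index_le wf idx; lia.
- by case: ifP => // _ h; case: ifP => // _; exact: (stack_index_level_inj wf).
- by case: ifP => // _ h; case: ifP => // _; exact: (stack_index_var_inj wf).
Qed.

Lemma stack_wf_frame t f c cT D :
  stack_wf t D -> stack_wf (TProp f (tin t) (tdepth t) (tindex t) c cT) D.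
Proof. by case; constructor. Qed.

Lemma stack_wf_step t D a z :
  stack_wf t D -> tpre a t z -> stack_wf (tpeff a t) (next_depth a D).
Proof.
case: a => [X d | X d | | o | o X d] wf pre; try exact: stack_wf_frame.
- by have ed := push_depth wf pre; subst d; exact: stack_wf_push pre.
- by have ed := pop_depth wf pre; subst d; exact: stack_wf_pop pre.
Qed.

Lemma tindex_step_low t D a z k Y d :
  stack_wf t D -> tpre a t z -> k <= D -> k <= next_depth a D -> d <= k ->
  tindex (tpeff a t) Y d = tindex t Y d.
Proof.
case: a => [X e | X e | | o | o X e] wf pre kD k_next dk //=.
- rewrite (push_depth wf pre) /upd_index.
  by case: ifP => // /andP[_ /eqP ed]; exfalso; lia.
- have ed := pop_depth wf pre; subst e; case: pre => [/andP[D_ge1 _] _].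
  rewrite /upd_index /= in k_next *.
  by case: ifP => // /andP[_ /eqP dD]; exfalso; lia.
Qed.

Lemma tc_step_mono t D a z k :
  stack_wf t D -> tpre a t z -> k <= D ->
  (forall o X d, a = OrigD o X d -> k < d) ->
  tc t k <= tc (tpeff a t) k.
Proof.
case: a => [X e | X e | | o | o X e] wf pre kD dec_above //=.
- rewrite (push_depth wf pre) /upd_nat; case: eqP => [? | _]; first lia.
  by case: eqP => [-> | _ //]; exact: leqnSn.
- by have := dec_above o X e erefl; case: ifP => // /andP[ek _]; lia.
Qed.

Lemma tc_push (t : tprop Q) X k z :
  tpre (Push X k) t z -> tc t k < Max Q /\ tc (tpeff (Push X k) t) k = (tc t k).+1.
Proof. by case=> _ [_ [_ lt_max]]; rewrite /= /upd_nat (ltn_eqF (ltnSn k)) eqxx. Qed.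

Lemma tneff_dec (a : tact Q) t z X :
  tpre a t z -> tneff a X = Some Dec -> exists o Y d, a = OrigD o Y d.
Proof.
case: a => [| | | o | o Y d] //= pre; last by exists o, Y, d.
by case: pre => noDec _ /noDec.
Qed.

Lemma tneff_dec_nonzero (a : tact Q) t z X :
  tpre a t z -> tneff a X = Some Dec -> z X = false.
Proof.
case: a => [| | | o | o Y d] //= pre dec; first by case: pre => /(_ X).
by case: pre => _ [_ [sat_pre _]]; move: (sat_pre _ (qN_dec_pre dec)) => /negbTE.
Qed.

Lemma tneff_inc_in (a : tact Q) t z X : tpre a t z -> tin t X -> tneff a X <> Some Inc.
Proof.
case: a => [| | | o | o Y d] //= pre inX.
- by case: pre => _ [_ /(_ X)]; rewrite inX => inc /inc.
- by case: pre => _ [_ [_ [/(_ X)]]]; rewrite inX => inc _ /inc.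
Qed.

End Stack.

Section Abstraction.
Local Open Scope R_scope.
Variable Q : qnp.

Definition abstract (s : gstate (QM Q)) : fS (TQ Q) := (s.1, zero_pattern s.2).

Lemma abstract_goal (s : gstate (QM Q)) : g_is_goal s <-> fgoal (abstract s).
Proof. exact: (@zpat_exists (QM Q) s.2 (tgoal s.1)). Qed.

Lemma abstract_applicable (a : tact Q) (s : gstate (QM Q)) :
  @g_applicable (QM Q) a s <-> @fpre (TQ Q) a (abstract s).
Proof. exact: (@zpat_exists (QM Q) s.2 (tpre a s.1)). Qed.

Lemma abstract_chooses (pi : fpolicy (TQ Q)) (s : gstate (QM Q)) a :
  g_chooses (policy_QM pi) s a <-> pi (abstract s) = Some a.
Proof. exact: (@zpat_exists (QM Q) s.2 (fun z => pi (s.1, z) = Some a)). Qed.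

Lemma abstract_init (s : gstate (QM Q)) : g_is_init s -> abstract s = finit (TQ Q).
Proof.
by case: s => t v [_ /(@zpat_exists (QM Q) v (ginit t)) [/= -> <-]].
Qed.

Lemma zero_pattern_succ (a : tact Q) (s s' : gstate (QM Q)) Y :
  (forall X, 0 <= s.2 X) -> @g_succ (QM Q) a s s' ->
  match tneff a Y with
  | Some Inc => zero_pattern s'.2 Y = false
  | Some Dec => True
  | None => zero_pattern s'.2 Y = zero_pattern s.2 Y
  end.
Proof.
(* [/=] turns [gV (QM Q)] into [qV Q], so that lra sees a single atom [s.2 Y] *)
move=> /= nonneg [_ /(_ Y) [_]] /=; case: (tneff a Y) => [[] | ] // h.
  by apply/zero_patternP => zero; have := nonneg Y; lra.
by rewrite /zero_pattern h.
Qed.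

Lemma abstract_succ (a : tact Q) (s s' : gstate (QM Q)) :
  (forall X, 0 <= s.2 X) -> @g_succ (QM Q) a s s' ->
  @fsucc (TQ Q) a (abstract s) (abstract s').
Proof.
move=> nonneg succ; split=> [| Y]; first by case: succ.
exact: zero_pattern_succ.
Qed.

Lemma abstract_succ_det (a : tact Q) (s s' : gstate (QM Q)) u :
  (forall X, 0 <= s.2 X) -> (forall X, tneff a X <> Some Dec) ->
  @g_succ (QM Q) a s s' -> @fsucc (TQ Q) a (abstract s) u -> u = abstract s'.
Proof.
move=> nonneg noDec succ; case: u => t z [/= -> zY]; congr pair; first by case: succ.
apply: functional_extensionality => Y; have := zY Y.
have := zero_pattern_succ Y nonneg succ; have := noDec Y.
by case: (tneff a Y) => [[] | ] //= _ -> ->.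
Qed.

End Abstraction.

Section StrongCyclic.
Variables (P : fond) (pi : fpolicy P).
Hypothesis cyclic : strong_cyclic pi.

Lemma strong_cyclic_progress s :
  freach pi (finit P) s -> ~ fgoal s -> exists a, pi s = Some a /\ fpre a s.
Proof.
move=> reach notgoal; have [g [/clos_rt_rt1n_iff reach_g goal]] := cyclic reach.
by case: reach_g goal => [// | s' g' [_ [a [choose [pre _]]]] _ _]; exists a.
Qed.

Lemma freach_det_path (u : nat -> fS P) T :
  (forall i, (T <= i)%N -> forall s, fstep pi (u i) s -> s = u i.+1) ->
  forall s, freach pi (u T) s -> exists j, (T <= j)%N /\ s = u j.
Proof.
move=> det; suff gen x s : freach pi x s ->
    forall i, (T <= i)%N -> x = u i -> exists j, (T <= j)%N /\ s = u j.
  by move=> s /gen/(_ T (leqnn T) erefl).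
elim=> [x0 s0 step | x0 | x0 y0 s0 _ IH1 _ IH2] i Ti ex; subst x0.
- by exists i.+1; split; [exact: leqW | exact: det].
- by exists i; split.
- by have [j [Tj ey]] := IH1 i Ti erefl; exact: IH2 j Tj ey.
Qed.

Lemma strong_cyclic_det_path (u : nat -> fS P) T :
  freach pi (finit P) (u T) ->
  (forall i, (T <= i)%N -> forall s, fstep pi (u i) s -> s = u i.+1) ->
  exists j, (T <= j)%N /\ fgoal (u j).
Proof.
move=> reach det; have [g [reach_g goal]] := cyclic reach.
by have [j [Tj eg]] := freach_det_path det reach_g; exists j; rewrite -eg.
Qed.

End StrongCyclic.

Section Trajectory.
Local Open Scope R_scope.
Variables (Q : qnp) (pi : fpolicy (TQ Q)) (eps : R).
Variables (st : nat -> gstate (QM Q)) (ac : nat -> tact Q) (len : option nat).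
Hypothesis traj : max_eps_pi_traj eps (policy_QM pi) st ac len.

Lemma traj_nonneg i : in_states len i -> forall X, 0 <= (st i).2 X.
Proof.
case: traj => [[init _] [steps _]]; case: i => [_ | i /steps [_ [_ [_ [[_ succ] _]]]] X].
  exact: init.
by case: (succ X).
Qed.

Lemma traj_fstep i : in_steps len i -> fstep pi (abstract (st i)) (abstract (st i.+1)).
Proof.
move=> hi; have [notgoal [choose [appl [succ _]]]] := traj.2.1 i hi.
split; first by move/abstract_goal.
exists (ac i); split; first exact/abstract_chooses.
split; first exact/abstract_applicable.
exact: abstract_succ (traj_nonneg (in_steps_states hi)) succ.
Qed.

Lemma traj_freach i : in_states len i -> freach pi (finit (TQ Q)) (abstract (st i)).
Proof.
elim: i => [_ | i IH hi]; first by rewrite (abstract_init traj.1); exact: rt_refl.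
exact: rt_trans (IH (in_steps_states hi)) (rt_step _ _ _ _ (traj_fstep hi)).
Qed.

Lemma traj_fstep_det i s :
  in_steps len i -> (forall X, tneff (ac i) X <> Some Dec) ->
  fstep pi (abstract (st i)) s -> s = abstract (st i.+1).
Proof.
move=> hi noDec [_ [a [choose [_ succ]]]].
have [_ [/abstract_chooses chosen [_ [succ_i _]]]] := traj.2.1 i hi.
move: chosen; rewrite choose => -[ea]; rewrite ea in succ.
exact: abstract_succ_det (traj_nonneg (in_steps_states hi)) noDec succ_i succ.
Qed.

End Trajectory.

Section Run.
Local Open Scope R_scope.
Variables (Q : qnp) (eps : R) (st : nat -> gstate (QM Q)) (ac : nat -> tact Q).
Hypothesis eps_gt0 : 0 < eps.
Hypothesis run_init : g_is_init (st 0).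
Hypothesis run_applicable : forall i, @g_applicable (QM Q) (ac i) (st i).
Hypothesis run_succ : forall i, @g_succ (QM Q) (ac i) (st i) (st i.+1).
Hypothesis run_eps : forall i, eps_change eps (st i) (st i.+1).

Local Notation t i := (st i).1.
Local Notation v i := (st i).2.

Lemma run_nonneg i X : 0 <= v i X.
Proof. by case: i => [| i]; [exact: run_init.1 | case: (run_succ i) => _ /(_ X) []]. Qed.

Lemma run_pre i : tpre (ac i) (t i) (zero_pattern (v i)).
Proof. by apply/(@zpat_exists (QM Q) _ (tpre (ac i) (t i))); exact: run_applicable. Qed.

Lemma run_next i : t i.+1 = tpeff (ac i) (t i).
Proof. by case: (run_succ i). Qed.

Lemma run_num_effect i X :
  match tneff (ac i) X with
  | Some Inc => v i X < v i.+1 X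
  | Some Dec => v i.+1 X < v i X
  | None => v i.+1 X = v i X
  end.
Proof. by case: (run_succ i) => _ /(_ X) []. Qed.

Fixpoint run_depth (i : nat) : nat :=
  if i is j.+1 then next_depth (ac j) (run_depth j) else 0.

Lemma run_stack_wf i : stack_wf (t i) (run_depth i).
Proof.
elim: i => [| i IH]; last by rewrite run_next; exact: stack_wf_step IH (run_pre i).
by case: run_init => _ [z [_ [-> _]]]; exact: stack_wf_init.
Qed.

Lemma run_dec_pos i X : tneff (ac i) X = Some Dec -> 0 < v i X.
Proof.
move=> /(tneff_dec_nonzero (run_pre i)) /zero_patternP nonzero.
by have := run_nonneg i X; lra.
Qed.

Lemma run_eventually_no_dec_var X T :
  (forall i, (T <= i)%N -> tin (t i) X) ->
  eventually (fun i => tneff (ac i) X <> Some Dec).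
Proof.
move=> inX; apply: (@eventually_no_eps_drop (fun i => v i X) _ eps T eps_gt0) => i Ti.
  have := run_num_effect i X; have := tneff_inc_in (run_pre i) (inX i Ti).
  by case: (tneff (ac i) X) => [[] | ] noinc num //; lra.
move=> dec; split; first exact: run_dec_pos.
have := run_num_effect i X; rewrite dec => lt_v.
case: (run_eps (Rlt_not_eq _ _ lt_v)) => [ge_eps | [_ ->]]; last by right.
by left; rewrite Rabs_left in ge_eps; lra.
Qed.

Section AboveLevel.
Variables k T : nat.
Hypothesis depth_ge : forall i, (T <= i)%N -> (k <= run_depth i)%N.

Lemma run_index_frozen i Y d :
  (T <= i)%N -> (d <= k)%N -> tindex (t i) Y d = tindex (t T) Y d.
Proof.
move=> + dk; elim: i => [| i IH]; first by rewrite leqn0 => /eqP ->.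
rewrite leq_eqVlt ltnS => /predU1P[-> // | Ti].
rewrite run_next (tindex_step_low Y (run_stack_wf i) (run_pre i) (depth_ge Ti)) ?IH //.
exact: (depth_ge (leqW Ti)).
Qed.

Lemma run_eventually_dec_above :
  eventually (fun i => forall o X d, ac i = OrigD o X d -> (k < d)%N).
Proof.
pose frozen Y := exists d, (d <= k)%N /\ tindex (t T) Y d.
have frozen_in Y i : frozen Y -> (T <= i)%N -> tin (t i) Y.
  case=> d [dk idx] Ti; apply: (stack_index_in (run_stack_wf i) (d := d)).
  by rewrite run_index_frozen.
have [N late] : eventually (fun i =>
    (T <= i)%N /\ forall Y, frozen Y -> tneff (ac i) Y <> Some Dec).
  apply: eventually_and (eventually_ge T) _.
  apply: (@eventually_forall_fin _
    (fun Y i => frozen Y -> tneff (ac i) Y <> Some Dec)) => Y.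
  case: (classic (frozen Y)) => [fY | nfY]; last by exists 0%N.
  have [M noDec] := run_eventually_no_dec_var (fun i => frozen_in Y i fY).
  by exists M => i /noDec.
exists N => i /late [Ti noDec] o X d e; rewrite ltnNge; apply/negP => dk.
have := run_pre i; rewrite e => -[dec [_ [_ [_ idx]]]].
apply: (noDec X); last by rewrite e.
by exists d; rewrite -(run_index_frozen X Ti dk).
Qed.

Lemma run_eventually_no_push : eventually (fun i => forall X, ac i <> Push X k).
Proof.
have [N late] := eventually_and (eventually_ge T) run_eventually_dec_above.
pose room i := INR (Max Q - tc (t i) k)%N.
(* c(k) is only reset by the decrements at levels <= k, which have stopped *)
have [M noPush] : eventually (fun i => ~ exists X, ac i = Push X k).
  apply: (@eventually_no_eps_drop room _ 1 N Rlt_0_1) => i /late [Ti dec_above].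
    apply/le_INR/leP; rewrite run_next.
    have := tc_step_mono (run_stack_wf i) (run_pre i) (depth_ge Ti) dec_above; lia.
  case=> X e; have := run_pre i; rewrite /room run_next e => /tc_push [lt_max ->].
  have -> : (Max Q - tc (t i) k = (Max Q - (tc (t i) k).+1).+1)%N by lia.
  by rewrite S_INR; split; [have := pos_INR (Max Q - (tc (t i) k).+1); lra | left; lra].
by exists M => i /noPush noX X e; apply: noX; exists X.
Qed.

Lemma run_eventually_no_dec_or_deeper :
  eventually (fun i => forall X, tneff (ac i) X <> Some Dec) \/
  eventually (fun i => (k < run_depth i)%N).
Proof.
have [N late] := eventually_and run_eventually_dec_above
  (eventually_and (eventually_ge T) run_eventually_no_push).
case: (classic (exists i0, (N <= i0)%N /\ run_depth i0 = k)) => [[i0 [Ni0 at_k]] | never].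
  left; have stays i : (i0 <= i)%N -> run_depth i = k.
    elim: i => [| i IH]; first by rewrite leqn0 => /eqP e0; rewrite -e0.
    rewrite leq_eqVlt ltnS => /predU1P[<- // | i0i].
    have [_ [Ti noPush]] := late i (leq_trans Ni0 i0i).
    have wf := run_stack_wf i; have := run_pre i; rewrite (IH i0i) in wf *.
    have deeper := depth_ge (leqW Ti); rewrite /= (IH i0i) in deeper *.
    case: (ac i) noPush deeper => [X d | X d | | o | o X d] // noPush deeper pre.
    + by have ed := push_depth wf pre; subst d; case: (noPush X).
    + have ed := pop_depth wf pre; subst d; case: pre => /andP[k_ge1 _] _.
      by rewrite /= in deeper; lia.
  exists i0 => i i0i X /(tneff_dec (run_pre i)) [o [Y [d e]]].
  have [dec_above _] := late i (leq_trans Ni0 i0i).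
  have := run_pre i; rewrite e => -[_ [_ [_ [_ idx]]]].
  have := stack_index_le (run_stack_wf i) idx; rewrite stays //.
  by have := dec_above o Y d e; lia.
right; exists N => i Ni; have [_ [Ti _]] := late i Ni.
rewrite ltn_neqAle depth_ge // andbT; apply/eqP => e.
by apply: never; exists i.
Qed.

End AboveLevel.

Lemma run_eventually_no_dec_from k :
  eventually (fun i => (k <= run_depth i)%N) ->
  eventually (fun i => forall X, tneff (ac i) X <> Some Dec).
Proof.
move Hm : ((nV Q).+1 - k)%N => m; elim: m k Hm => [| m IH] k Hm [T depth_ge].
  by have := stack_depth_le (run_stack_wf T); have := depth_ge T (leqnn T); lia.
have [// | deeper] := run_eventually_no_dec_or_deeper depth_ge.
by apply: (IH k.+1) deeper; lia.
Qed.

Lemma run_eventually_no_dec : eventually (fun i => forall X, tneff (ac i) X <> Some Dec).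
Proof. by apply: (@run_eventually_no_dec_from 0); exists 0%N. Qed.

End Run.

Lemma infinite_traj_eventually_no_dec (Q : qnp) (pi : gpolicy (QM Q)) (eps : R) st ac :
  Rlt 0 eps -> max_eps_pi_traj eps pi st ac None ->
  eventually (fun i => forall X, tneff (ac i) X <> Some Dec).
Proof.
move=> eps_gt0 [init [steps _]]; apply: (run_eventually_no_dec eps_gt0 init).
all: by move=> i; have [_ [_ [? [? ?]]]] := steps i I.
Qed.

Theorem theorem12 (Q : qnp) (pi : fpolicy (TQ Q)) :
  strong_cyclic pi -> qnp_solves (policy_QM pi).
Proof.
move=> cyclic eps eps_gt0 st ac len traj; have reach := traj_freach traj.
case: len traj reach => [n |] traj reach.
  exists n; split; first exact: leqnn.
  case: traj => _ [_ [// | stuck]].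
  apply/abstract_goal; apply: NNPP => notgoal.
  have [a [choose pre]] := strong_cyclic_progress cyclic (reach n (leqnn n)) notgoal.
  by apply: (stuck a); [apply/abstract_chooses | apply/abstract_applicable].
have [T noDec] := infinite_traj_eventually_no_dec eps_gt0 traj.
have [j [_ goal]] := strong_cyclic_det_path cyclic (reach T I)
  (fun i Ti s => traj_fstep_det traj I (noDec i Ti)).
by exists j; split=> //; apply/abstract_goal.
Qed.
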